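(* Let $\mathbf L=(L,\vee,\wedge,0,1)$ be a complemented modular lattice with $0\ne1$. Then the following are equivalent: (i) $x^{++}=\{x\}$ for all $x\in L$; (ii) for every $x\in L$ and every $y\in x^{++}$ there exists some $z\in y^+$ such that either $(x\vee y)\wedge z=0$ or $(x\wedge y)\vee z=1$.
   Context: For $a\in L$, $a^+:=\{x\in L\mid a\vee x=1,\ a\wedge x=0\}$ (the set of all complements of $a$). For $A\subseteq L$, $A^+:=\{x\in L\mid a\vee x=1\text{ and }a\wedge x=0\text{ for all }a\in A\}$, and $a^{++}:=(a^+)^+$. *)

From mathcomp Require Import all_boot all_order.
Set Implicit Arguments. Unset Strict Implicit. Unset Printing Implicit Defensive.
Import Order.Theory.
Local Open Scope order_scope.

Section Comps.
Context {disp : Order.disp_t} {L : tbLatticeType disp}.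

Definition compl_set (a : L) : L -> Prop :=
  fun x => a `|` x = \top /\ a `&` x = \bot.

Definition compl_of_set (A : L -> Prop) : L -> Prop :=
  fun x => forall a, A a -> a `|` x = \top /\ a `&` x = \bot.

Definition compl2 (a : L) : L -> Prop := compl_of_set (compl_set a).

Definition modular_lattice : Prop :=
  forall x y z : L, x <= z -> x `|` (y `&` z) = (x `|` y) `&` z.

Definition complemented_lattice : Prop :=
  forall x : L, exists y : L, compl_set x y.
End Comps.

From mathcomp Require Import all_boot all_order.
Local Open Scope order_scope.
Import Order.Theory.

(* In a modular lattice two comparable elements a <= b with a common
   complement c coincide: b = (a ∨ c) ∧ b = a ∨ (c ∧ b) = a.  Any y in x^{++}
   shares with x every complement of x, so it equals x as soon as it is
   comparable with x.  Condition (ii) supplies the comparability: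
   (x ∨ y) ∧ z = 0 makes y <= x ∨ y share the complement z, so y = x ∨ y, and
   dually (x ∧ y) ∨ z = 1 gives x ∧ y = y. *)

Section Complements.
Context {disp : Order.disp_t} {L : tbLatticeType disp}.

Lemma compl2_refl (x : L) : compl2 x x.
Proof. by move=> a [xa1 xa0]; rewrite joinC meetC. Qed.

Hypothesis Hmod : modular_lattice (L := L).

Lemma modular_le_compl_eq {a b c : L} :
  a <= b -> a `|` c = \top -> b `&` c = \bot -> a = b.
Proof.
move=> ab ac1 bc0.
by have := Hmod _ c _ ab; rewrite ac1 meet1x meetC bc0 joinx0.
Qed.

Lemma le_of_compl_joinI_eq0 {x y z : L} :
  compl_set y z -> (x `|` y) `&` z = \bot -> x <= y.
Proof.
move=> [yz1 _] xyz0.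
by rewrite [y](modular_le_compl_eq (leUr _ _) yz1 xyz0) leUl.
Qed.

Lemma ge_of_compl_meetU_eq1 {x y z : L} :
  compl_set y z -> (x `&` y) `|` z = \top -> y <= x.
Proof.
move=> [_ yz0] xyz1.
by rewrite -[y](modular_le_compl_eq (leIr _ _) xyz1 yz0) leIl.
Qed.

Hypothesis Hcompl : complemented_lattice (L := L).

Lemma compl2_le_eq {x y : L} : compl2 x y -> x <= y -> y = x.
Proof.
move=> xy2 xy; have [c xc] := Hcompl x; have [_ cy0] := xy2 c xc.
by apply/esym/(modular_le_compl_eq xy xc.1); rewrite meetC.
Qed.

Lemma compl2_ge_eq {x y : L} : compl2 x y -> y <= x -> y = x.
Proof.
move=> xy2 yx; have [c xc] := Hcompl x; have [cy1 _] := xy2 c xc.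
by apply: (modular_le_compl_eq yx _ xc.2); rewrite joinC.
Qed.

End Complements.

Theorem theorem1 (disp : Order.disp_t) (L : tbLatticeType disp)
  (Hmod : modular_lattice (L := L))
  (Hcompl : complemented_lattice (L := L))
  (H01 : (\bot : L) <> \top) :
  (forall x : L, forall y : L, compl2 x y <-> y = x)
  <->
  (forall x y : L, compl2 x y ->
     exists z : L, compl_set y z /\
       ((x `|` y) `&` z = \bot \/ (x `&` y) `|` z = \top)).
Proof.
split=> [compl2_eq x y /compl2_eq -> | cond_ii x y].
  have [z xz] := Hcompl x.
  by exists z; split=> //; left; rewrite joinxx; case: xz.
split=> [xy2 | ->]; last exact: compl2_refl.
have [z [yz [xyz0 | xyz1]]] := cond_ii x y xy2.
- exact: (compl2_le_eq Hmod Hcompl xy2 (le_of_compl_joinI_eq0 Hmod yz xyz0)).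
- exact: (compl2_ge_eq Hmod Hcompl xy2 (ge_of_compl_meetU_eq1 Hmod yz xyz1)).
Qed.
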